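(* Let $N_x,N_y\ge3$, $\Delta x,\Delta y>0$, $\ell>0$. Consider the grid points $(i,j)$, $1\le i\le N_x$, $1\le j\le N_y$, with neighbor relation $(i,j)\sim(i',j')$ iff $|i-i'|+|j-j'|=1$; let $I$ be the set of interior points ($1<i<N_x$, $1<j<N_y$), $B_c$ the four corner points, and $B$ the remaining (non-corner) boundary points. Let positive numbers $D_{\frac{i+i'}{2},\frac{j+j'}{2}}>0$ be given for every neighboring pair, and numbers $\sigma_{i,j}\ge0$ for every grid point. With the index map $\mathcal I(i,j)=(i-1)N_y+j$, define the $N_xN_y\times N_xN_y$ matrix $\mathbf L$ by (writing $w_2(i,j;i',j')=|i-i'|\Delta x^2+|j-j'|\Delta y^2$ and $w_1(i,j;i',j')=|i-i'|\Delta x+|j-j'|\Delta y$, and $D'=D_{\frac{i+i'}{2},\frac{j+j'}{2}}$, $\tilde D=D_{\frac{i+\tilde i}{2},\frac{j+\tilde j}{2}}$): \begin{itemize} \item for $(i,j)\in I$: $\mathbf L_{\mathcal I(i,j),\mathcal I(i,j)}=\sum_{(\tilde i,\tilde j)\sim(i,j)}\tilde D/w_2(i,j;\tilde i,\tilde j)+\sigma_{i,j}$ and $\mathbf L_{\mathcal I(i,j),\mathcal I(i',j')}=-D'/w_2(i,j;i',j')$ for $(i',j')\sim(i,j)$; \item for $(i,j)\in B$: $\mathbf L_{\mathcal I(i,j),\mathcal I(i,j)}=1+\ell\sum_{(\tilde i,\tilde j)\in I,\,(\tilde i,\tilde j)\sim(i,j)}\tilde D/w_1(i,j;\tilde i,\tilde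 j)$ and $\mathbf L_{\mathcal I(i,j),\mathcal I(i',j')}=-\ell D'/w_1(i,j;i',j')$ for $(i',j')\in I$, $(i',j')\sim(i,j)$; \item for $(i,j)\in B_c$: $\mathbf L_{\mathcal I(i,j),\mathcal I(i,j)}=1+\frac{\sqrt2\ell}{2}\sum_{(\tilde i,\tilde j)\sim(i,j)}\tilde D/w_1(i,j;\tilde i,\tilde j)$ and $\mathbf L_{\mathcal I(i,j),\mathcal I(i',j')}=-\frac{\sqrt2\ell}{2}D'/w_1(i,j;i',j')$ for $(i',j')\sim(i,j)$; \item all other entries are $0$. \end{itemize} Then $\mathbf L$ is a weakly chained diagonally dominant (WCDD) matrix.
   Context: $\mathbf L$ is the staggered-grid finite difference matrix discretizing $-\nabla\cdot D\nabla u+\sigma_a u$ on $[x_1,x_{N_x}]\times[y_1,y_{N_y}]$ with the Robin condition $u+\ell\nu\cdot D\nabla u$ on the boundary (isotropic $D$ evaluated at edge midpoints). For a square matrix $A=(A_{kl})$, row $k$ is weakly diagonally dominant (WDD) if $|A_{kk}|\ge\sum_{l\ne k}|A_{kl}|$ and strictly diagonally dominant (SDD) if the inequality is strict; $A$ is WDD if all rows are WDD. $A$ is weakly chained diagonally dominant (WCDD) if $A$ is WDD and for each row $k$ that is not SDD there exist indices $k_1,\dots,k_p$ and $l$ such that $A_{kk_1},A_{k_1k_2},\dots,A_{k_{p-1}k_p},A_{k_pl}$ are all nonzero and row $l$ is SDD. *)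

From HB Require Import structures.
From mathcomp Require Import all_boot all_order all_algebra.
Set Implicit Arguments. Unset Strict Implicit. Unset Printing Implicit Defensive.
Import Order.TTheory GRing.Theory Num.Theory.
Local Open Scope ring_scope.

Section DD.
Variable R : numDomainType.
Variable n : nat.
Implicit Type A : 'M[R]_n.

Definition row_WDD A (k : 'I_n) : bool :=
  \sum_(l < n | l != k) `|A k l| <= `|A k k|.
Definition row_SDD A (k : 'I_n) : bool :=
  \sum_(l < n | l != k) `|A k l| < `|A k k|.
Definition WDD A : Prop := forall k, row_WDD A k.

(* For each non-SDD row k there are k_1..k_p (the sequence s, p >= 0) and l
   with A k k_1, A k_1 k_2, ..., A k_p l all nonzero and row l SDD. *)
Definition WCDD A : Prop :=
  WDD A /\
  forall k : 'I_n, ~~ row_SDD A k ->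
    exists (s : seq 'I_n) (l : 'I_n),
      path (fun a b => A a b != 0) k (rcons s l) && row_SDD A l.
End DD.

Definition adist (m n : nat) : nat := (m - n) + (n - m).

Definition in_grid (Nx Ny i j : nat) : bool :=
  [&& 1 <= i, i <= Nx, 1 <= j & j <= Ny]%N.
Definition nbr (i j i' j' : nat) : bool := (adist i i' + adist j j' == 1)%N.
Definition interior (Nx Ny i j : nat) : bool :=
  [&& 1 < i, i < Nx, 1 < j & j < Ny]%N.
Definition corner (Nx Ny i j : nat) : bool :=
  ((i == 1) || (i == Nx)) && ((j == 1) || (j == Ny)).
Definition bdry (Nx Ny i j : nat) : bool :=
  [&& in_grid Nx Ny i j, ~~ interior Nx Ny i j & ~~ corner Nx Ny i j].

Section Lmat.
Variable R : rcfType.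
Variables (Nx Ny : nat) (dx dy ell : R).
(* D (i+i') (j+j') stands for D_{(i+i')/2,(j+j')/2} (doubled midpoint coords) *)
Variable D : nat -> nat -> R.
Variable sigma : nat -> nat -> R.

Definition w2 (i j i' j' : nat) : R :=
  (adist i i')%:R * dx ^+ 2 + (adist j j')%:R * dy ^+ 2.
Definition w1 (i j i' j' : nat) : R :=
  (adist i i')%:R * dx + (adist j j')%:R * dy.
Definition Dm (i j i' j' : nat) : R := D (i + i')%N (j + j')%N.

Definition nbr_sum (P : nat -> nat -> bool) (F : nat -> nat -> R) (i j : nat) : R :=
  \sum_(1 <= i' < Nx.+1) \sum_(1 <= j' < Ny.+1 | nbr i j i' j' && P i' j') F i' j'.

Definition cst : R := Num.sqrt 2 * ell / 2.

Definition Lent (i j i' j' : nat) : R :=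
  if interior Nx Ny i j then
    if (i == i') && (j == j') then
      nbr_sum (fun _ _ => true) (fun a b => Dm i j a b / w2 i j a b) i j + sigma i j
    else if nbr i j i' j' then - (Dm i j i' j' / w2 i j i' j') else 0
  else if corner Nx Ny i j then
    if (i == i') && (j == j') then
      1 + cst * nbr_sum (fun _ _ => true) (fun a b => Dm i j a b / w1 i j a b) i j
    else if nbr i j i' j' then - (cst * (Dm i j i' j' / w1 i j i' j')) else 0
  else
    if (i == i') && (j == j') then
      1 + ell * nbr_sum (interior Nx Ny) (fun a b => Dm i j a b / w1 i j a b) i j
    else if interior Nx Ny i' j' && nbr i j i' j' then
      - (ell * (Dm i j i' j' / w1 i j i' j')) else 0.

(* Index map I(i,j) = (i-1) Ny + j (1-based), i.e. row k (0-based) <-> 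
   i = k %/ Ny + 1, j = k %% Ny + 1. *)
Definition Lmat : 'M[R]_(Nx * Ny) :=
  \matrix_(k, m) Lent (k %/ Ny).+1 (k %% Ny).+1 (m %/ Ny).+1 (m %% Ny).+1.
End Lmat.

From HB Require Import structures.
From mathcomp Require Import all_boot all_order all_algebra.
From mathcomp Require Import zify.
Import Order.TTheory GRing.Theory Num.Theory.
Local Open Scope ring_scope.

(* All off-diagonal entries of L are nonpositive and each diagonal entry is the
   sum of their moduli plus an excess: sigma >= 0 on interior rows, 1 on the
   other rows.  So L is WDD and every non-interior row is SDD.  An interior row
   (i, j) has a nonzero entry in the column of (i - 1, j), whose index is
   smaller by Ny; following these entries the index decreases until an SDD
   row is reached. *)

Section DiagonalDominance.
Context {R : numDomainType} {n : nat} {A : 'M[R]_n}.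

Lemma offdiag_norm_sum_ge0 k : 0 <= \sum_(l < n | l != k) `|A k l|.
Proof. by apply: sumr_ge0 => l _; exact: normr_ge0. Qed.

Lemma row_WDD_excess {k} {b : R} :
  0 <= b -> A k k = b + \sum_(l < n | l != k) `|A k l| -> row_WDD A k.
Proof.
move=> b_ge0 Akk.
rewrite /row_WDD Akk ger0_norm ?lerDr //.
exact: addr_ge0 b_ge0 (offdiag_norm_sum_ge0 k).
Qed.

Lemma row_SDD_excess {k} {b : R} :
  0 < b -> A k k = b + \sum_(l < n | l != k) `|A k l| -> row_SDD A k.
Proof.
move=> b_gt0 Akk.
rewrite /row_SDD Akk ger0_norm ?ltrDr //.
exact: addr_ge0 (ltW b_gt0) (offdiag_norm_sum_ge0 k).
Qed.

Lemma WCDD_descent :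
  WDD A ->
  (forall k, ~~ row_SDD A k -> exists2 k' : 'I_n, (k' < k)%N & A k k' != 0) ->
  WCDD A.
Proof.
move=> wddA descent; split => // k.
suff chain m (k' : 'I_n) : (k' < m)%N -> ~~ row_SDD A k' ->
    exists s l, path (fun a b => A a b != 0) k' (rcons s l) && row_SDD A l.
  exact: (chain k.+1).
elim: m k' => [//|m IH] k' lt_k'm nsdd.
have [k'' lt_k''k' nz] := descent k' nsdd.
have [sdd''|nsdd''] := boolP (row_SDD A k'').
  by exists [::], k''; rewrite /= nz sdd''.
have [s [l /andP[p sddl]]] := IH k'' (leq_trans lt_k''k' lt_k'm) nsdd''.
by exists (k'' :: s), l; rewrite rcons_cons /= nz p sddl.
Qed.

End DiagonalDominance.

Lemma divn_modn_mulDl (q : nat) {M r : nat} :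
  (r < M)%N -> ((q * M + r) %/ M = q /\ (q * M + r) %% M = r)%N.
Proof.
move=> lt_rM; have M_gt0 : (0 < M)%N by apply: leq_ltn_trans lt_rM.
by rewrite divnMDl // divn_small // addn0 modnMDl modn_small.
Qed.

Lemma sum_ord_mul_divmod (V : nmodType) (N M : nat) (G : nat -> nat -> V) :
  \sum_(l < N * M) G (l %/ M).+1 (l %% M).+1 =
  \sum_(1 <= i < N.+1) \sum_(1 <= j < M.+1) G i j.
Proof.
rewrite -(big_mkord xpredT (fun l => G (l %/ M).+1 (l %% M).+1)) big_nat_mul.
rewrite [RHS]big_add1 /=; apply: eq_big_nat => i _.
rewrite big_add1 /= mulSn addnC -{1}[(i * M)%N]add0n big_addn addKn.
apply: eq_big_nat => j /andP[_ lt_jM].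
by rewrite addnC; have [-> ->] := divn_modn_mulDl i lt_jM.
Qed.

Lemma eqn_divmod (M k l : nat) :
  (k == l) = ((k %/ M == l %/ M) && (k %% M == l %% M))%N.
Proof.
apply/eqP/andP => [-> //|[/eqP eq_div /eqP eq_mod]].
by rewrite (divn_eq k M) (divn_eq l M) eq_div eq_mod.
Qed.

Lemma nbr_cases {i j i' j'} : nbr i j i' j' ->
  (adist i i' = 1 /\ adist j j' = 0 \/ adist i i' = 0 /\ adist j j' = 1)%N.
Proof.
rewrite /nbr; case: (adist i i') => [|[|?]]; case: (adist j j') => [|[|?]] //=.
all: by [left | right].
Qed.

Lemma nbr_neq {i j i' j'} : nbr i j i' j' -> (i, j) != (i', j').
Proof. by apply: contraTN => /eqP[-> ->]; rewrite /nbr /adist !subnn. Qed.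

Lemma interior_in_grid {Nx Ny i j} : interior Nx Ny i j -> in_grid Nx Ny i j.
Proof. by rewrite /interior /in_grid => /and4P[? ? ? ?]; apply/and4P; split; lia. Qed.

Section LmatRows.
Variables (R : rcfType) (Nx Ny : nat) (dx dy ell : R) (D sigma : nat -> nat -> R).
Hypotheses (dx_gt0 : 0 < dx) (dy_gt0 : 0 < dy) (ell_gt0 : 0 < ell).
Hypothesis D_gt0 : forall i j i' j', in_grid Nx Ny i j -> in_grid Nx Ny i' j' ->
  nbr i j i' j' -> 0 < D (i + i')%N (j + j')%N.
Hypothesis sigma_ge0 : forall i j, in_grid Nx Ny i j -> 0 <= sigma i j.

Local Notation L := (Lmat Nx Ny dx dy ell D sigma).
Local Notation Le := (Lent Nx Ny dx dy ell D sigma).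

Lemma Dm_div_w2_gt0 i j i' j' : in_grid Nx Ny i j -> in_grid Nx Ny i' j' ->
  nbr i j i' j' -> 0 < Dm D i j i' j' / w2 dx dy i j i' j'.
Proof.
move=> gij gij' nbr_ij; rewrite divr_gt0 ?D_gt0 // /w2.
by case: (nbr_cases nbr_ij) => -[-> ->]; rewrite mul0r ?add0r ?addr0 mul1r exprn_gt0.
Qed.

Lemma Dm_div_w1_gt0 i j i' j' : in_grid Nx Ny i j -> in_grid Nx Ny i' j' ->
  nbr i j i' j' -> 0 < Dm D i j i' j' / w1 dx dy i j i' j'.
Proof.
move=> gij gij' nbr_ij; rewrite divr_gt0 ?D_gt0 // /w1.
by case: (nbr_cases nbr_ij) => -[-> ->]; rewrite mul0r ?add0r ?addr0 mul1r.
Qed.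

Lemma offdiag_norm_sum_stencil (E F : nat -> nat -> R) (P : nat -> nat -> bool) c i j :
  0 <= c -> (forall i' j', in_grid Nx Ny i' j' -> nbr i j i' j' -> 0 <= F i' j') ->
  (forall i' j', (i, j) != (i', j') ->
     E i' j' = if nbr i j i' j' && P i' j' then - (c * F i' j') else 0) ->
  \sum_(1 <= i' < Nx.+1) \sum_(1 <= j' < Ny.+1 | (i, j) != (i', j')) `|E i' j'| =
  c * nbr_sum Nx Ny P F i j.
Proof.
move=> c_ge0 F_ge0 E_off; rewrite /nbr_sum mulr_sumr.
apply: eq_big_nat => i' /andP[i'_ge1 i'_le]; rewrite mulr_sumr big_mkcond [RHS]big_mkcond /=.
apply: eq_big_nat => j' /andP[j'_ge1 j'_le].
have [[<- <-]|neq] := eqVneq (i, j) (i', j').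
  by rewrite /nbr /adist !subnn.
rewrite E_off //; case: ifP => [/andP[nbr_ij _]|]; last by rewrite normr0.
rewrite normrN ger0_norm // mulr_ge0 // F_ge0 //.
by rewrite /in_grid; apply/and4P; split; lia.
Qed.

Definition row_excess i j : R := if interior Nx Ny i j then sigma i j else 1.

Lemma row_excess_ge0 {i j} : in_grid Nx Ny i j -> 0 <= row_excess i j.
Proof. by rewrite /row_excess; case: ifP => // _ /sigma_ge0. Qed.

Lemma row_excess_gt0 {i j} : ~~ interior Nx Ny i j -> 0 < row_excess i j.
Proof. by rewrite /row_excess => /negbTE ->. Qed.

Lemma cst_gt0 : 0 < cst ell.
Proof. by rewrite /cst divr_gt0 // mulr_gt0 // sqrtr_gt0. Qed.

Lemma Lent_diag i j : in_grid Nx Ny i j ->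
  Le i j i j = row_excess i j +
    \sum_(1 <= i' < Nx.+1) \sum_(1 <= j' < Ny.+1 | (i, j) != (i', j')) `|Le i j i' j'|.
Proof.
move=> gij.
have Dw1_ge0 i' j' : in_grid Nx Ny i' j' -> nbr i j i' j' ->
    0 <= Dm D i j i' j' / w1 dx dy i j i' j'.
  by move=> gij' nbr_ij; exact/ltW/Dm_div_w1_gt0.
rewrite [LHS]/Lent /row_excess !eqxx /=.
case: ifP => [int_ij|bnd_ij].
  rewrite (offdiag_norm_sum_stencil (Le i j)
    (fun a b => Dm D i j a b / w2 dx dy i j a b) (fun _ _ => true) 1) ?mul1r 1?addrC //.
  - by move=> i' j' gij' nbr_ij; exact/ltW/Dm_div_w2_gt0.
  - by move=> i' j' neq; rewrite /Lent int_ij -xpair_eqE (negbTE neq) andbT mul1r.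
case: ifP => [crn_ij|ncrn_ij].
  rewrite (offdiag_norm_sum_stencil (Le i j)
    (fun a b => Dm D i j a b / w1 dx dy i j a b) (fun _ _ => true) (cst ell)) ?(ltW cst_gt0) //.
  by move=> i' j' neq; rewrite /Lent bnd_ij crn_ij -xpair_eqE (negbTE neq) andbT.
rewrite (offdiag_norm_sum_stencil (Le i j)
  (fun a b => Dm D i j a b / w1 dx dy i j a b) (interior Nx Ny) ell) ?ltW //.
by move=> i' j' neq; rewrite /Lent bnd_ij ncrn_ij -xpair_eqE (negbTE neq) andbC.
Qed.

Lemma in_grid_divmod (k : 'I_(Nx * Ny)) : in_grid Nx Ny (k %/ Ny).+1 (k %% Ny).+1.
Proof.
have Ny_gt0 : (0 < Ny)%N by case: Ny k => [|//] k; rewrite muln0 in k; case: k.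
by rewrite /in_grid ltn_divLR // ltn_mod Ny_gt0 ltn_ord.
Qed.

Lemma Lmat_offdiag_sum (k : 'I_(Nx * Ny)) :
  \sum_(l < Nx * Ny | l != k) `|L k l| =
  \sum_(1 <= i' < Nx.+1) \sum_(1 <= j' < Ny.+1 | ((k %/ Ny).+1, (k %% Ny).+1) != (i', j'))
    `|Le (k %/ Ny).+1 (k %% Ny).+1 i' j'|.
Proof.
rewrite big_mkcond; under [RHS]eq_bigr do rewrite big_mkcond.
rewrite -sum_ord_mul_divmod; apply: eq_bigr => l _.
by rewrite mxE xpair_eqE !eqSS -eqn_divmod eq_sym.
Qed.

Lemma Lmat_diag (k : 'I_(Nx * Ny)) :
  L k k = row_excess (k %/ Ny).+1 (k %% Ny).+1 + \sum_(l < Nx * Ny | l != k) `|L k l|.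
Proof. by rewrite Lmat_offdiag_sum mxE Lent_diag ?in_grid_divmod. Qed.

Lemma Lent_nbr_neq0 i j i' j' : interior Nx Ny i j -> in_grid Nx Ny i' j' ->
  nbr i j i' j' -> Le i j i' j' != 0.
Proof.
move=> int_ij gij' nbr_ij.
rewrite /Lent int_ij -xpair_eqE (negbTE (nbr_neq nbr_ij)) nbr_ij oppr_eq0.
by rewrite gt_eqF // Dm_div_w2_gt0 // interior_in_grid.
Qed.

Lemma Lmat_descent (k : 'I_(Nx * Ny)) : interior Nx Ny (k %/ Ny).+1 (k %% Ny).+1 ->
  exists2 k' : 'I_(Nx * Ny), (k' < k)%N & L k k' != 0.
Proof.
move=> int_k; have lt_r : (k %% Ny < Ny)%N by case/and4P: int_k; lia.
have := in_grid_divmod k; have := divn_eq k Ny; have := int_k.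
set q := (k %/ Ny)%N; set r := (k %% Ny)%N.
move=> /and4P[q_gt0 _ _ _] k_eq /and4P[_ q_le _ _].
have k'_eq : (k - Ny = q.-1 * Ny + r)%N.
  by rewrite k_eq; case: (q) q_gt0 => // q' _; rewrite mulSn /=; lia.
have k'_ord : (k - Ny < Nx * Ny)%N := leq_ltn_trans (leq_subr _ _) (ltn_ord k).
exists (Ordinal k'_ord); first by rewrite /=; lia.
rewrite mxE /= k'_eq; have [-> ->] := divn_modn_mulDl q.-1 lt_r.
rewrite prednK //; apply: Lent_nbr_neq0 => //.
  by move: int_k => /and4P[? ? ? ?]; rewrite /in_grid; apply/and4P; split; lia.
by rewrite /nbr /adist /q; lia.
Qed.

Lemma Lmat_WDD : WDD L.
Proof.
by move=> k; apply: row_WDD_excess (Lmat_diag k); rewrite row_excess_ge0 ?in_grid_divmod.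
Qed.

Lemma Lmat_nonSDD_descent (k : 'I_(Nx * Ny)) :
  ~~ row_SDD L k -> exists2 k' : 'I_(Nx * Ny), (k' < k)%N & L k k' != 0.
Proof.
move=> nsdd; apply: Lmat_descent; apply: contraNT nsdd => bnd_k.
exact: row_SDD_excess (row_excess_gt0 bnd_k) (Lmat_diag k).
Qed.

End LmatRows.

(* [3 <= Nx] and [3 <= Ny] only make the interior nonempty. *)
Theorem proposition5p2 (R : rcfType) (Nx Ny : nat) (dx dy ell : R)
    (D : nat -> nat -> R) (sigma : nat -> nat -> R) :
  (3 <= Nx)%N -> (3 <= Ny)%N -> 0 < dx -> 0 < dy -> 0 < ell ->
  (forall i j i' j', in_grid Nx Ny i j -> in_grid Nx Ny i' j' ->
     nbr i j i' j' -> 0 < D (i + i')%N (j + j')%N) ->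
  (forall i j, in_grid Nx Ny i j -> 0 <= sigma i j) ->
  WCDD (Lmat Nx Ny dx dy ell D sigma).
Proof.
move=> _ _ dx_gt0 dy_gt0 ell_gt0 D_gt0 sigma_ge0.
apply: WCDD_descent; first exact: Lmat_WDD.
exact: Lmat_nonSDD_descent.
Qed.
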